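(* Assume successive states are independent and identically distributed according to $m$. For every $\delta\in(0,1)$, the set $NE^b_\delta$ of Nash equilibrium payoffs of the $\delta$-discounted blind game is a subset of the set $NE_\delta$ of Nash equilibrium payoffs of the $\delta$-discounted (non-blind) game.
   Context: The (non-blind) game: finite sets $S$ (states), $A=S$ (messages), $B$ (receiver actions); payoff $u=(u^1,u^2):S\times B\to\mathbb{R}^2$ (player 1 = sender, player 2 = receiver); states $s_1,s_2,\dots$ in $S$. At each stage $n$ the sender observes $s_n$ and announces $a_n\in A$; the receiver observes $a_n$ and chooses $b_n\in B$; $b_n$ is publicly disclosed; payoffs are not observed. Sender strategies are maps $\sigma:\bigcup_{n\ge0}(S\times A\times B)^n\times S\to\Delta(A)$, receiver strategies maps $\tau:\bigcup_{n\ge0}(A\times B)^n\to\Delta(B)$, and payoffs are $\mathbf{E}_{\sigma,\tau}[\sum_{n\ge1}(1-\delta)\delta^{n-1}u(s_n,b_n)]$. The blind game is identical except that the sender does not observe the receiver's actions: sender strategies are maps $\sigma:\bigcup_{n\ge0}(S\times A)^n\times S\to\Delta(A)$. *)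

From mathcomp Require Import all_boot all_order all_algebra.
From mathcomp Require Import all_classical all_reals all_analysis.
Set Implicit Arguments. Unset Strict Implicit. Unset Printing Implicit Defensive.
Import Order.TTheory GRing.Theory Num.Theory.
Local Open Scope ring_scope.

Section Game.
Variables (R : realType) (S B : finType).
(* Messages: A = S.  One stage record = (state s_k, message a_k, action b_k). *)
Definition stage_rec := (S * S * B)%type.

Definition is_dist (T : finType) (p : T -> R) :=
  (forall t, 0 <= p t) /\ \sum_(t : T) p t = 1.

(* Non-blind sender strategy: past (s,a,b) history, current state |-> Delta(A) *)
Definition sender_strat := seq stage_rec -> S -> S -> R.
(* Blind sender strategy: past (s,a) history, current state |-> Delta(A) *)
Definition blind_strat := seq (S * S) -> S -> S -> R.
(* Receiver strategy: past public (a,b) history, current message |-> Delta(B);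
   (the pair "past history, current message" is an element of (A x B)^n x A) *)
Definition receiver_strat := seq (S * B) -> S -> B -> R.

Definition valid_sender (sg : sender_strat) := forall h s, is_dist (sg h s).
Definition valid_blind (sg : blind_strat) := forall h s, is_dist (sg h s).
Definition valid_receiver (tau : receiver_strat) := forall h a, is_dist (tau h a).

Definition pub (e : stage_rec) : S * B := (e.1.2, e.2).
Definition priv_blind (e : stage_rec) : S * S := e.1.

Definition blind_as_sender (sg : blind_strat) : sender_strat :=
  fun h s => sg (map priv_blind h) s.

Variable m : S -> R. (* i.i.d. law of the states *)

Fixpoint play_prob (sg : sender_strat) (tau : receiver_strat)
    (past : seq stage_rec) (rest : seq stage_rec) : R :=
  match rest with
  | [::] => 1
  | e :: r => m e.1.1 * sg past e.1.1 e.1.2 * tau (map pub past) e.1.2 e.2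
              * play_prob sg tau (rcons past e) r
  end.

Definition stage_payoff (u : S -> B -> R) (sg : sender_strat)
    (tau : receiver_strat) (n : nat) : R :=
  \sum_(h : n.-tuple stage_rec) \sum_(e : stage_rec)
     play_prob sg tau [::] (rcons h e) * u e.1.1 e.2.

(* delta-discounted payoff  E[ sum_{n>=1} (1-delta) delta^(n-1) u(s_n,b_n) ] *)
Definition disc_payoff (delta : R) (u : S -> B -> R) (sg : sender_strat)
    (tau : receiver_strat) : R :=
  limn (fun N => \sum_(0 <= n < N) (1 - delta) * delta ^+ n * stage_payoff u sg tau n).

Variables (u1 u2 : S -> B -> R).

Definition payoff_vec (delta : R) sg tau : R * R :=
  (disc_payoff delta u1 sg tau, disc_payoff delta u2 sg tau).

Definition is_NE (delta : R) (sg : sender_strat) (tau : receiver_strat) :=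
  [/\ valid_sender sg, valid_receiver tau,
      (forall sg', valid_sender sg' ->
         disc_payoff delta u1 sg' tau <= disc_payoff delta u1 sg tau)
    & (forall tau', valid_receiver tau' ->
         disc_payoff delta u2 sg tau' <= disc_payoff delta u2 sg tau)].

Definition is_NE_blind (delta : R) (sg : blind_strat) (tau : receiver_strat) :=
  [/\ valid_blind sg, valid_receiver tau,
      (forall sg', valid_blind sg' ->
         disc_payoff delta u1 (blind_as_sender sg') tau
         <= disc_payoff delta u1 (blind_as_sender sg) tau)
    & (forall tau', valid_receiver tau' ->
         disc_payoff delta u2 (blind_as_sender sg) tau'
         <= disc_payoff delta u2 (blind_as_sender sg) tau)].

Definition NE_payoffs (delta : R) : set (R * R) :=
  [set x | exists sg tau, is_NE delta sg tau /\ x = payoff_vec delta sg tau].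

Definition NE_blind_payoffs (delta : R) : set (R * R) :=
  [set x | exists sg tau, is_NE_blind delta sg tau
                          /\ x = payoff_vec delta (blind_as_sender sg) tau].
End Game.

From mathcomp Require Import all_boot all_order all_algebra.
From mathcomp Require Import all_classical all_reals all_analysis.
From mathcomp Require Import ring.
Set Implicit Arguments. Unset Strict Implicit. Unset Printing Implicit Defensive.
Import Order.TTheory GRing.Theory Num.Theory.
Local Open Scope ring_scope.
Local Open Scope classical_set_scope.

(* Let (s, t) be an equilibrium of the blind game.  Against the blind sender s
   the receiver's own past actions carry no information about the states, so t
   can be replaced by the receiver t' that plays, after messages a_1..a_n, the
   t-marginal law of b_{n+1} given a_1..a_{n+1} (averaging over its own past
   actions): every stage law of (state, action) is unchanged.  Conversely, t'
   ignores the actions, so against t' any non-blind sender deviation is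
   replicated, stage by stage, by a blind one that conditions on the
   (state, message) history only.  The replica earns the same against t' as
   against t, hence at most the payoff of s.  So (s, t') is an equilibrium of
   the non-blind game with the same payoff. *)

Section SeqSum.
Variable V : nmodType.

Fixpoint seqsum (T : finType) (n : nat) (f : seq T -> V) : V :=
  if n is n'.+1 then \sum_(x : T) seqsum n' (fun l => f (x :: l)) else f [::].

Lemma sum_tupleE (T : finType) n (f : seq T -> V) :
  \sum_(h : n.-tuple T) f h = seqsum n f.
Proof.
elim: n f => [|n IH] f /=.
  by rewrite (big_pred1 [tuple]) // => t; rewrite [t]tuple0 /= eqxx.
rewrite (reindex (fun p : T * n.-tuple T => [tuple of p.1 :: p.2])) /=; last first.
  exists (fun t : n.+1.-tuple T => (thead t, [tuple of behead t])).
    by move=> [x t] _ /=; rewrite theadE; congr pair; apply: val_inj.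
  by move=> t _ /=; rewrite -tuple_eta.
rewrite -(pair_bigA _ (fun x (t : n.-tuple T) => f (x :: t))) /=.
by apply: eq_bigr => x _; apply: (IH (fun l => f (x :: l))).
Qed.

Lemma eq_seqsum (T : finType) n (f g : seq T -> V) :
  (forall l, size l = n -> f l = g l) -> seqsum n f = seqsum n g.
Proof.
elim: n f g => [|n IH] f g fg /=; first exact: fg.
by apply: eq_bigr => x _; apply: IH => l sl; apply: fg; rewrite /= sl.
Qed.

Lemma seqsum_sum (T I : finType) n (F : I -> seq T -> V) :
  seqsum n (fun l => \sum_(i : I) F i l) = \sum_(i : I) seqsum n (F i).
Proof.
elim: n F => [|n IH] F //=.
by rewrite exchange_big; apply: eq_bigr => x _; apply: IH.
Qed.

Lemma seqsum_rcons (T : finType) n (f : seq T -> V) :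
  seqsum n.+1 f = seqsum n (fun l => \sum_(x : T) f (rcons l x)).
Proof.
elim: n f => [|n IH] f //=.
by apply: eq_bigr => x _; apply: (IH (fun l => f (x :: l))).
Qed.

Lemma seqsum_zip (X Y : finType) n (f : seq (X * Y) -> V) :
  seqsum n f = seqsum n (fun xs => seqsum n (fun ys => f (zip xs ys))).
Proof.
elim: n f => [|n IH] f //=.
transitivity (\sum_(p : X * Y) seqsum n (fun l => f ((p.1, p.2) :: l))).
  by apply: eq_bigr => -[x y].
rewrite -(pair_bigA _ (fun x y => seqsum n (fun l => f ((x, y) :: l)))) /=.
apply: eq_bigr => x _; rewrite -seqsum_sum IH.
by apply: eq_seqsum => xs _; rewrite seqsum_sum.
Qed.

End SeqSum.
Arguments seqsum {V T}.

Lemma seqsumZ (R : pzSemiRingType) (T : finType) n c (f : seq T -> R) :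
  seqsum n (fun l => c * f l) = c * seqsum n f.
Proof.
elim: n f => [|n IH] f //=.
by rewrite mulr_sumr; apply: eq_bigr => x _; apply: IH.
Qed.

Lemma seqsum_ge0 (R : numDomainType) (T : finType) n (f : seq T -> R) :
  (forall l, 0 <= f l) -> 0 <= seqsum n f.
Proof.
elim: n f => [|n IH] f f_ge0 //=.
by apply: sumr_ge0 => x _; apply: IH.
Qed.

Lemma card_gt0_dist (R : realType) (T : finType) (p : T -> R) :
  is_dist p -> (0 < #|T|)%N.
Proof.
case=> _ p1; case: (pickP (fun _ : T => true)) => [t _|T0]; first by apply/card_gt0P; exists t.
by move: p1; rewrite big_pred0 // => /eqP; rewrite eq_sym oner_eq0.
Qed.

Section Game.
Variables (R : realType) (S B : finType) (m : S -> R).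
Local Notation sender_strat := (sender_strat R S B).
Local Notation blind_strat := (blind_strat R S).
Local Notation receiver_strat := (receiver_strat R S B).
Local Notation pub := (@pub S B).
Local Notation priv_blind := (@priv_blind S B).

(* [play_prob] splits into the sender's factor (states and messages) and the
   receiver's factor (actions), which only sees the public history. *)
Fixpoint sender_weight (sg : sender_strat) (past r : seq (stage_rec S B)) : R :=
  if r is e :: r' then
    m e.1.1 * sg past e.1.1 e.1.2 * sender_weight sg (rcons past e) r'
  else 1.

Fixpoint receiver_weight (tau : receiver_strat) (past l : seq (S * B)) : R :=
  if l is p :: l' then tau past p.1 p.2 * receiver_weight tau (rcons past p) l'
  else 1.

Fixpoint blind_weight (sg : blind_strat) (past l : seq (S * S)) : R :=
  if l is x :: l' then m x.1 * sg past x.1 x.2 * blind_weight sg (rcons past x) l'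
  else 1.

Lemma play_probE sg tau past r :
  play_prob m sg tau past r =
  sender_weight sg past r * receiver_weight tau (map pub past) (map pub r).
Proof.
elim: r past => [|e r IH] past /=; first by rewrite mulr1.
by rewrite IH map_rcons /=; ring.
Qed.

Lemma sender_weight_rcons sg past r e :
  sender_weight sg past (rcons r e) =
  sender_weight sg past r * (m e.1.1 * sg (past ++ r) e.1.1 e.1.2).
Proof.
elim: r past => [|e0 r IH] past /=; first by rewrite cats0 mulr1 mul1r.
by rewrite IH cat_rcons mulrA.
Qed.

Lemma receiver_weight_rcons tau past l p :
  receiver_weight tau past (rcons l p) =
  receiver_weight tau past l * tau (past ++ l) p.1 p.2.
Proof.
elim: l past => [|p0 l IH] past /=; first by rewrite cats0 mulr1 mul1r.
by rewrite IH cat_rcons mulrA.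
Qed.

Lemma blind_weight_rcons sg past l x :
  blind_weight sg past (rcons l x) =
  blind_weight sg past l * (m x.1 * sg (past ++ l) x.1 x.2).
Proof.
elim: l past => [|x0 l IH] past /=; first by rewrite cats0 mulr1 mul1r.
by rewrite IH cat_rcons mulrA.
Qed.

Lemma sender_weight_blind (sg : blind_strat) past r :
  sender_weight (blind_as_sender sg) past r =
  blind_weight sg (map priv_blind past) (map priv_blind r).
Proof. by elim: r past => [|e r IH] past //=; rewrite IH map_rcons. Qed.

Lemma receiver_weight_ge0 tau past l :
  valid_receiver tau -> 0 <= receiver_weight tau past l.
Proof.
move=> Vtau; elim: l past => [|p l IH] past //=.
by apply: mulr_ge0 => //; case: (Vtau past p.1).
Qed.

Lemma receiver_weight_sum1 tau (as_ : seq S) past : valid_receiver tau ->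
  seqsum (size as_) (fun bs : seq B => receiver_weight tau past (zip as_ bs)) = 1.
Proof.
move=> Vtau; elim: as_ past => [|a as_ IH] past //=.
under eq_bigr do rewrite seqsumZ IH mulr1.
by case: (Vtau past a).
Qed.

Lemma map_priv_blind_zip (sa : seq (S * S)) (bs : seq B) :
  size sa = size bs -> map priv_blind (zip sa bs) = sa.
Proof. by elim: sa bs => [|x sa IH] [|b bs] //= [] /IH ->. Qed.

Lemma map_pub_zip (sa : seq (S * S)) (bs : seq B) :
  map pub (zip sa bs) = zip (map snd sa) bs.
Proof. by elim: sa bs => [|x sa IH] [|b bs] //=; rewrite IH. Qed.

Lemma stage_payoffE u sg tau n :
  stage_payoff m u sg tau n =
  seqsum n (fun sa : seq (S * S) => seqsum n (fun bs : seq B =>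
     \sum_(x : S * S) \sum_(b : B)
       sender_weight sg [::] (rcons (zip sa bs) (x, b)) *
       receiver_weight tau [::] (rcons (zip (map snd sa) bs) (x.2, b)) * u x.1 b)).
Proof.
rewrite /stage_payoff (@sum_tupleE _ _ _ (fun h : seq (stage_rec S B) =>
  \sum_e play_prob m sg tau [::] (rcons h e) * u e.1.1 e.2)) seqsum_zip.
apply: eq_seqsum => sa _; apply: eq_seqsum => bs _.
rewrite pair_bigA /=; apply: eq_bigr => -[x b] _ /=.
by rewrite play_probE /= map_rcons map_pub_zip.
Qed.

(* Probability under [tau] of playing [b] on message [a] after the messages
   [as_], averaged over the receiver's own past actions. *)
Definition action_marginal (tau : receiver_strat) (as_ : seq S) (a : S) (b : B) : R :=
  seqsum (size as_) (fun bs => receiver_weight tau [::] (rcons (zip as_ bs) (a, b))).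

Definition marginal_receiver (tau : receiver_strat) : receiver_strat :=
  fun h a b => action_marginal tau (map fst h) a b.

Lemma stage_payoff_blind u (sg : blind_strat) tau n :
  stage_payoff m u (blind_as_sender sg) tau n =
  seqsum n (fun sa : seq (S * S) => \sum_(x : S * S) \sum_(b : B)
     blind_weight sg [::] (rcons sa x) * u x.1 b * action_marginal tau (map snd sa) x.2 b).
Proof.
rewrite stage_payoffE; apply: eq_seqsum => sa sa_n.
transitivity (seqsum n (fun bs : seq B => \sum_(x : S * S) \sum_(b : B)
    (blind_weight sg [::] (rcons sa x) * u x.1 b) *
    receiver_weight tau [::] (rcons (zip (map snd sa) bs) (x.2, b)))).
  apply: eq_seqsum => bs bs_n; apply: eq_bigr => x _; apply: eq_bigr => b _.
  by rewrite sender_weight_blind /= map_rcons map_priv_blind_zip ?sa_n ?bs_n //; ring.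
rewrite seqsum_sum; apply: eq_bigr => x _; rewrite seqsum_sum; apply: eq_bigr => b _.
by rewrite seqsumZ /action_marginal size_map sa_n.
Qed.

Section MarginalReceiver.
Variable tau : receiver_strat.
Hypothesis Vtau : valid_receiver tau.

Lemma marginal_receiver_valid : valid_receiver (marginal_receiver tau).
Proof.
move=> h a; split=> [b|].
  by apply: seqsum_ge0 => l; apply: receiver_weight_ge0.
rewrite /marginal_receiver /action_marginal -seqsum_sum.
rewrite -[RHS](@receiver_weight_sum1 tau (map fst h) [::] Vtau).
apply: eq_seqsum => bs _; under eq_bigr do rewrite receiver_weight_rcons cat0s.
by rewrite -mulr_sumr; case: (Vtau (zip (map fst h) bs) a) => _ ->; rewrite mulr1.
Qed.

Lemma action_marginal_marginal as_ a b :
  action_marginal (marginal_receiver tau) as_ a b = action_marginal tau as_ a b.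
Proof.
rewrite {1}/action_marginal; transitivity (seqsum (size as_) (fun bs =>
    action_marginal tau as_ a b * receiver_weight (marginal_receiver tau) [::] (zip as_ bs))).
  apply: eq_seqsum => bs bs_n; rewrite receiver_weight_rcons cat0s mulrC.
  by rewrite /marginal_receiver -/(unzip1 _) unzip1_zip // bs_n.
by rewrite seqsumZ receiver_weight_sum1 ?mulr1 //; apply: marginal_receiver_valid.
Qed.

Lemma stage_payoff_marginal_receiver u (sg : blind_strat) n :
  stage_payoff m u (blind_as_sender sg) tau n =
  stage_payoff m u (blind_as_sender sg) (marginal_receiver tau) n.
Proof.
rewrite !stage_payoff_blind; apply: eq_seqsum => sa _.
by apply: eq_bigr => x _; apply: eq_bigr => b _; rewrite action_marginal_marginal.
Qed.

Section BlindReplica.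
Variable sg : sender_strat.
Hypotheses (Vm : is_dist m) (Vsg : valid_sender sg).
Local Notation tau' := (marginal_receiver tau).

Lemma sender_weight_ge0 past r : 0 <= sender_weight sg past r.
Proof.
elim: r past => [|e r IH] past //=; apply: mulr_ge0 => //.
by apply: mulr_ge0; [case: Vm | case: (Vsg past e.1.1)].
Qed.

(* [history_weight sa] is the probability, under (sg, tau'), that the
   (state, message) history is [sa]; [next_weight sa x] additionally weights
   by the probability that the sender's next message is x.2 in state x.1. *)
Definition history_weight (sa : seq (S * S)) : R :=
  seqsum (size sa) (fun bs =>
    sender_weight sg [::] (zip sa bs) * receiver_weight tau' [::] (zip (map snd sa) bs)).

Definition next_weight (sa : seq (S * S)) (x : S * S) : R :=
  seqsum (size sa) (fun bs =>
    sender_weight sg [::] (zip sa bs) * receiver_weight tau' [::] (zip (map snd sa) bs)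
    * sg (zip sa bs) x.1 x.2).

(* On null histories the uniform law is an arbitrary choice. *)
Definition blind_replica : blind_strat := fun h s a =>
  if history_weight h == 0 then #|S|%:R^-1 else next_weight h (s, a) / history_weight h.

Lemma history_weight_ge0 sa : 0 <= history_weight sa.
Proof.
apply: seqsum_ge0 => l.
by apply: mulr_ge0; [apply: sender_weight_ge0 | apply: receiver_weight_ge0 marginal_receiver_valid].
Qed.

Lemma next_weight_ge0 sa x : 0 <= next_weight sa x.
Proof.
apply: seqsum_ge0 => l; apply: mulr_ge0; last by case: (Vsg (zip sa l) x.1).
by apply: mulr_ge0; [apply: sender_weight_ge0 | apply: receiver_weight_ge0 marginal_receiver_valid].
Qed.

Lemma sum_next_weight sa s : \sum_(a : S) next_weight sa (s, a) = history_weight sa.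
Proof.
rewrite /next_weight -seqsum_sum; apply: eq_seqsum => bs _.
by rewrite -mulr_sumr; case: (Vsg (zip sa bs) s) => _ ->; rewrite mulr1.
Qed.

Lemma next_weightE sa x : next_weight sa x = blind_replica sa x.1 x.2 * history_weight sa.
Proof.
rewrite /blind_replica; case: eqP => [h0|/eqP h0]; last by rewrite divfK.
rewrite h0 mulr0; move: (sum_next_weight sa x.1); rewrite h0 => /eqP.
rewrite psumr_eq0 => [/allP/(_ x.2 (mem_index_enum _))/eqP|a _]; last exact: next_weight_ge0.
by case: x.
Qed.

Lemma blind_replica_valid : valid_blind blind_replica.
Proof.
move=> h s; split=> [a|]; rewrite /blind_replica; case: eqP => [_|/eqP h0].
- by rewrite invr_ge0 ler0n.
- by apply: divr_ge0; [apply: next_weight_ge0 | apply: history_weight_ge0].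
- rewrite sumr_const (_ : #|_| = #|S|) // -[LHS]mulr_natr mulVf // pnatr_eq0 -lt0n.
  exact: card_gt0_dist Vm.
- by rewrite -mulr_suml sum_next_weight mulfV.
Qed.

Lemma history_weightE sa : history_weight sa = blind_weight blind_replica [::] sa.
Proof.
elim/last_ind: sa => [|sa x IH]; first by rewrite /history_weight /= mulr1.
rewrite blind_weight_rcons cat0s -IH /history_weight size_rcons seqsum_rcons.
transitivity (seqsum (size sa) (fun bs => m x.1 *
   (sender_weight sg [::] (zip sa bs) * receiver_weight tau' [::] (zip (map snd sa) bs)
    * sg (zip sa bs) x.1 x.2))).
  apply: eq_seqsum => bs bs_n.
  under eq_bigr do rewrite map_rcons !zip_rcons ?size_map ?bs_n //
    sender_weight_rcons receiver_weight_rcons !cat0s.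
  rewrite /= -[RHS]mulr1.
  case: (marginal_receiver_valid (zip (map snd sa) bs) x.2) => _ <-.
  by rewrite !mulr_sumr; apply: eq_bigr => b _; ring.
by rewrite seqsumZ -/(next_weight sa x) next_weightE -/(history_weight sa); ring.
Qed.

Lemma stage_payoff_blind_replica u n :
  stage_payoff m u sg tau' n = stage_payoff m u (blind_as_sender blind_replica) tau' n.
Proof.
rewrite stage_payoffE stage_payoff_blind; apply: eq_seqsum => sa sa_n.
transitivity (seqsum n (fun bs => \sum_(x : S * S) \sum_(b : B)
   (m x.1 * action_marginal tau (map snd sa) x.2 b * u x.1 b) *
   (sender_weight sg [::] (zip sa bs) * receiver_weight tau' [::] (zip (map snd sa) bs)
    * sg (zip sa bs) x.1 x.2))).
  apply: eq_seqsum => bs bs_n; apply: eq_bigr => x _; apply: eq_bigr => b _.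
  rewrite sender_weight_rcons receiver_weight_rcons !cat0s /= /marginal_receiver.
  by rewrite -/(unzip1 _) unzip1_zip ?size_map ?sa_n ?bs_n //; ring.
rewrite seqsum_sum; apply: eq_bigr => x _; rewrite seqsum_sum; apply: eq_bigr => b _.
rewrite seqsumZ -sa_n -/(next_weight sa x) next_weightE history_weightE.
by rewrite blind_weight_rcons cat0s action_marginal_marginal; ring.
Qed.

End BlindReplica.
End MarginalReceiver.
End Game.

Lemma eq_disc_payoff (R : realType) (S B : finType) (m : S -> R) delta u s1 t1 s2 t2 :
  (forall n, stage_payoff m u s1 t1 n = stage_payoff m u s2 t2 n) ->
  disc_payoff m delta u s1 t1 = disc_payoff (B := B) m delta u s2 t2.
Proof. by move=> /funext st; rewrite /disc_payoff st. Qed.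

Lemma blind_as_sender_valid (R : realType) (S B : finType) (sg : blind_strat R S) :
  valid_blind sg -> valid_sender (@blind_as_sender R S B sg).
Proof. by move=> Vsg h s; apply: Vsg. Qed.
Theorem proposition2 (R : realType) (S B : finType) (m : S -> R)
    (u1 u2 : S -> B -> R) (delta : R) :
  is_dist m -> 0 < delta < 1 ->
  NE_blind_payoffs m u1 u2 delta `<=` NE_payoffs m u1 u2 delta.
Proof.
move=> Vm _ x [sg [tau [[Vsg Vtau sg_best tau_best] ->]]].
have marginalE u (sg1 : blind_strat R S) :
    disc_payoff m delta u (blind_as_sender sg1) tau =
    disc_payoff m delta u (blind_as_sender sg1) (marginal_receiver tau).
  by apply: eq_disc_payoff => n; apply: stage_payoff_marginal_receiver.
exists (blind_as_sender sg), (marginal_receiver tau).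
split; last by rewrite /payoff_vec !marginalE.
split.
- exact: blind_as_sender_valid.
- exact: marginal_receiver_valid.
- move=> sg' Vsg'; rewrite -marginalE.
  rewrite (eq_disc_payoff _ (stage_payoff_blind_replica Vtau Vm Vsg' u1)) -marginalE.
  by apply: sg_best; apply: blind_replica_valid.
- by move=> tau'' Vtau''; rewrite -marginalE; apply: tau_best.
Qed.
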